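(* Let $G$ be a $P_5$-free graph, let $k\ge 1$, and let $C\subseteq V(G)$ be such that $G[C]$ is connected and contains no clique of size greater than $k$. Let $D\subseteq C$ with $|D|\le k+1$ be such that every vertex of $C$ is in $D$ or has a neighbor in $D$. Let $R\subseteq N(C)$ be such that the vertex set of every connected component of $G[R]$ is a module in $G$. Then $G[R\cup C]$ has a dominating set $\widetilde D$ with $D\subseteq \widetilde D$ and $|\widetilde D\setminus D|\le \max\{k+1,3\}$ (so $|\widetilde D|\le k+1+\max\{k+1,3\}$).
   Context: For $A\subseteq V(G)$, $N(A)$ is the set of vertices outside $A$ with a neighbor in $A$. A dominating set of a graph $F$ is a set $Z\subseteq V(F)$ such that every vertex of $F$ lies in $Z$ or has a neighbor in $Z$. A set $M\subseteq V(G)$ is a module in $G$ if $N(u)\setminus M=N(v)\setminus M$ for all $u,v\in M$. A graph is $P_5$-free if it has no induced path on 5 vertices. *)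

From mathcomp Require Import all_boot.
Set Implicit Arguments. Unset Strict Implicit. Unset Printing Implicit Defensive.

Section Graphs.
Variables (T : finType) (e : rel T).

Definition simple_graph := symmetric e /\ irreflexive e.

Definition P5_free : Prop :=
  forall f : 'I_5 -> T, injective f ->
    ~ (forall i j : 'I_5, e (f i) (f j) = ((i.+1 == j :> nat) || (j.+1 == i :> nat))).

Definition induced_rel (A : {set T}) : rel T :=
  [rel x y | [&& e x y, x \in A & y \in A]].

Definition connected_induced (A : {set T}) : Prop :=
  forall x y, x \in A -> y \in A -> connect (induced_rel A) x y.

Definition is_clique (Q : {set T}) : Prop :=
  forall x y, x \in Q -> y \in Q -> x != y -> e x y.

Definition nbhd (A : {set T}) : {set T} :=
  [set v | (v \notin A) && [exists u in A, e u v]].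

Definition nbr (u : T) : {set T} := [set w | e u w].

Definition is_module (M : {set T}) : Prop :=
  forall u v, u \in M -> v \in M -> nbr u :\: M = nbr v :\: M.

Definition component (R : {set T}) (x : T) : {set T} :=
  [set y in R | connect (induced_rel R) x y].

Definition dominating_in (S Z : {set T}) : Prop :=
  Z \subset S /\ forall v, v \in S -> v \in Z \/ exists2 z, z \in Z & e z v.

End Graphs.

From mathcomp Require Import all_boot.
From Stdlib Require Import Classical.
Set Implicit Arguments. Unset Strict Implicit. Unset Printing Implicit Defensive.

(* Shrink C to a set Q that is connected, dominates R, and loses one of these
   two properties whenever a vertex is removed. Such a Q is a clique, hence has
   at most k vertices, and D :|: Q is the required dominating set. If Q had two
   non-adjacent vertices, a vertex v farthest from one of them and a vertex u
   farthest from v would be non-cut vertices of G[Q] at distance at least 2.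
   By minimality each has a private neighbour in R; these are non-adjacent
   because the components of G[R] are modules. A shortest path from u towards
   v, extended at u by its private neighbour (and at v by its own when the
   distance is 2), then yields an induced P5. *)

Definition P5_adj (i j : 'I_5) : bool := (i.+1 == j :> nat) || (j.+1 == i :> nat).

(* The vertices 0, 1, 3 already tell apart the five neighbourhoods of P5. *)
Lemma P5_adj_inj (i j : 'I_5) : P5_adj i =1 P5_adj j -> i = j.
Proof.
move=> Hij; apply: val_inj; move: (Hij ord0) (Hij (inord 1)) (Hij (inord 3)).
by case: i j {Hij} => [[|[|[|[|[|?]]]]] ?] // [[|[|[|[|[|?]]]]] ?]; rewrite /P5_adj /= ?inordK.
Qed.

Lemma minimal_removal (T : finType) (P : {set T} -> Prop) (S : {set T}) : P S ->
  exists2 S' : {set T}, S' \subset S & P S' /\ forall w, w \in S' -> ~ P (S' :\ w).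
Proof.
have [n] := ubnP #|S|; elim: n S => // n IH S ltSn PS.
have [[w wS PSw] | noW] := classic (exists2 w, w \in S & P (S :\ w)).
  have ltSwn : #|S :\ w| < n by move: ltSn; rewrite (cardsD1 w S) wS.
  have [S' subS' PS'] := IH _ ltSwn PSw.
  by exists S' => //; apply: subset_trans subS' (subD1set S w).
by exists S => //; split => // w wS Pw; apply: noW; exists w.
Qed.

Section SimpleGraph.
Variables (T : finType) (e : rel T).
Hypotheses (esym : symmetric e) (eirr : irreflexive e).

Definition dominates (S A : {set T}) : Prop :=
  forall x, x \in A -> exists2 s, s \in S & e s x.

Definition private_nbr (S : {set T}) (u x : T) : Prop :=
  e u x /\ forall s, s \in S -> s != u -> ~~ e s x.

Lemma no_induced_P5 (a b c d g : T) : P5_free e ->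
  e a b -> e b c -> e c d -> e d g ->
  ~~ e a c -> ~~ e a d -> ~~ e a g -> ~~ e b d -> ~~ e b g -> ~~ e c g -> False.
Proof.
move=> P5 ab bc cd dg ac ad ag bd bg cg.
pose f (i : 'I_5) := nth a [:: a; b; c; d; g] i.
have adj_f i j : e (f i) (f j) = P5_adj i j.
  case: i j => [[|[|[|[|[|?]]]]] ?] // [[|[|[|[|[|?]]]]] ?] //=;
  by [ | rewrite eirr | rewrite esym | apply: negbTE | rewrite esym; apply: negbTE].
apply: (P5 f _ adj_f) => i j fij; apply: P5_adj_inj => k.
by rewrite -!adj_f fij.
Qed.

Lemma induced_sym (A : {set T}) : symmetric (induced_rel e A).
Proof. by move=> x y; rewrite /induced_rel /= esym (andbC (x \in A)). Qed.

Lemma private_nbr_of_minimal (S A : {set T}) w :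
  dominates S A -> ~ dominates (S :\ w) A -> exists2 x, x \in A & private_nbr S w x.
Proof.
move=> domS ndomSw; apply: NNPP => noPriv; apply: ndomSw => x xA.
have [s sS esx] := domS x xA.
have [esw | sw] := eqVneq s w; last by exists s; rewrite // !inE sw.
apply: NNPP => undom; apply: noPriv; exists x => //; split; first by rewrite -esw.
move=> s' s'S s'w; apply/negP => es'x; apply: undom.
by exists s'; rewrite // !inE s'w.
Qed.

Lemma component_module_adj (R : {set T}) x y u :
  (forall z, z \in R -> is_module e (component e R z)) ->
  x \in R -> y \in R -> e x y -> u \notin R -> e x u = e y u.
Proof.
move=> modR xR yR exy uR.
have xK : x \in component e R x by rewrite inE xR connect0.
have yK : y \in component e R x.
  by rewrite inE yR; apply: connect1; rewrite /induced_rel /= exy xR yR.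
have uK : u \notin component e R x by rewrite inE negb_and uR.
by have := congr1 (fun M : {set T} => u \in M) (modR x xR x y xK yK); rewrite !in_setD uK !inE.
Qed.

Section Balls.
Variables (S : {set T}) (r : T).
Hypotheses (rS : r \in S) (connS : connected_induced e S).

Fixpoint ball (n : nat) : {set T} :=
  if n is n'.+1 then ball n' :|: [set y in S | [exists z in ball n', e z y]]
  else [set r].

Lemma ballS n y :
  (y \in ball n.+1) = (y \in ball n) || (y \in S) && [exists z in ball n, e z y].
Proof. by rewrite /= in_setU inE. Qed.

Lemma ball_subset n : ball n \subset S.
Proof.
elim: n => [|n IH]; first by rewrite sub1set.
by apply/subsetP => y; rewrite ballS => /orP[/(subsetP IH) | /andP[]].
Qed.

Lemma subset_ball n m : n <= m -> ball n \subset ball m.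
Proof.
elim: m => [|m IH]; first by rewrite leqn0 => /eqP->.
rewrite leq_eqVlt => /orP[/eqP-> // | /IH subnm].
by apply: subset_trans subnm (subsetUl _ _).
Qed.

Lemma mem_ball1 a : (a \in ball 1) = (a == r) || (a \in S) && e r a.
Proof.
rewrite ballS inE; congr (_ || (_ && _)); apply/existsP/idP => [[z] | era].
  by rewrite inE => /andP[/eqP->].
by exists r; rewrite inE eqxx.
Qed.

Lemma ball_edge n a b : a \in ball n -> b \in S -> e a b -> b \in ball n.+1.
Proof.
by move=> aB bS eab; rewrite ballS bS; apply/orP; right; apply/existsP; exists a; rewrite aB.
Qed.

Lemma ball_far n a b : a \in ball n -> b \in S -> b \notin ball n.+1 -> ~~ e a b.
Proof. by move=> aB bS; apply: contra; apply: ball_edge. Qed.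

Lemma ball_neq n a b : a \in ball n -> b \notin ball n -> a != b.
Proof. by move=> aB; apply: contraNneq => <-. Qed.

Lemma ball_pred n a : a \in ball n.+1 -> a \notin ball n ->
  exists2 b, b \in ball n & e b a.
Proof. by rewrite ballS => /orP[-> // | /andP[_ /existsP[z /andP[]]]]; exists z. Qed.

Lemma ball_predS n a : a \in ball n.+2 -> a \notin ball n.+1 ->
  exists2 b, b \in ball n.+1 :\: ball n & e b a.
Proof.
move=> aB naB; have [b bB eba] := ball_pred aB naB.
exists b => //; rewrite inE bB andbT; apply: contra naB => bB'.
by apply: ball_edge bB' _ eba; apply: (subsetP (ball_subset n.+2)).
Qed.

Lemma ball_path p x n : x \in ball n -> path (induced_rel e S) x p ->
  last x p \in ball (n + size p).
Proof.
elim: p x n => [|y p IH] x n /=; first by rewrite addn0.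
move=> xB /andP[/and3P[exy _ yS] pth]; rewrite -addSnnS.
by apply: IH pth; apply: ball_edge xB yS exy.
Qed.

Lemma ball_exhaust : S \subset ball #|T|.
Proof.
apply/subsetP => a aS; have /connectP[p pth ->] := connS rS aS.
have [p' pth' uniq_p' _] := shortenP pth.
have := ball_path (n := 0) (set11 r) pth'; rewrite add0n => /(subsetP (subset_ball _)); apply.
by have := max_card (mem (r :: p')); rewrite (card_uniqP uniq_p') /= => /ltnW.
Qed.

Lemma ball_connect_avoid n w a : w \notin ball n -> a \in ball n ->
  connect (induced_rel e (S :\ w)) r a.
Proof.
have in_Sw m b : b \in ball m -> w \notin ball m -> b \in S :\ w.
  by move=> bB wB; rewrite !inE (ball_neq bB wB) (subsetP (ball_subset m)).
elim: n a => [|n IH] a wB; first by rewrite inE => /eqP->.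
have wB' : w \notin ball n by apply: contra wB; apply/subsetP/subset_ball.
rewrite ballS => /orP[aB | /andP[aS /existsP[z /andP[zB eza]]]]; first exact: IH.
apply: connect_trans (IH z wB' zB) (connect1 _).
by rewrite /induced_rel /= eza (in_Sw _ _ zB wB') (in_Sw _ _ (ball_edge zB aS eza) wB).
Qed.

Lemma connected_remove_far m w : S \subset ball m.+1 -> w \notin ball m ->
  connected_induced e (S :\ w).
Proof.
move=> Sm wm.
have conn_r a : a \in S :\ w -> connect (induced_rel e (S :\ w)) r a.
  case/setD1P => aw aS.
  have [aB | aB] := boolP (a \in ball m); first exact: ball_connect_avoid wm aB.
  have [z zB eza] := ball_pred (subsetP Sm a aS) aB.
  apply: connect_trans (ball_connect_avoid wm zB) (connect1 _).
  by rewrite /induced_rel /= eza !inE aw aS (ball_neq zB wm) (subsetP (ball_subset m)).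
move=> x y xSw ySw; apply: connect_trans (conn_r y ySw).
by rewrite (sym_connect_sym (induced_sym _)); apply: conn_r.
Qed.

Lemma exists_noncut_far b : b \in S -> r != b -> ~~ e r b ->
  exists v, [/\ v \in S, r != v, ~~ e r v & connected_induced e (S :\ v)].
Proof.
move=> bS rb nrb.
have nb1 : b \notin ball 1 by rewrite mem_ball1 negb_or eq_sym rb bS.
case: (ex_minnP (ex_intro (fun n => S \subset ball n) _ ball_exhaust)) => m Sm minm.
have m_gt1 : 1 < m.
  by rewrite ltnNge; apply: contra nb1 => /subset_ball/subsetP; apply; apply: (subsetP Sm).
case: m m_gt1 Sm minm => // m m_gt0 Sm minm.
have /subsetPn[v vS vm] : ~~ (S \subset ball m) by apply/negP => /minm; rewrite ltnn.
have v1 : v \notin ball 1 by apply: contra vm; apply/subsetP/subset_ball.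
move: v1; rewrite mem_ball1 vS /= negb_or eq_sym => /andP[rv nrv].
by exists v; split => //; apply: connected_remove_far Sm vm.
Qed.

Lemma P5_free_private_far u xu xv : P5_free e -> u \in S -> r != u -> ~~ e r u ->
  private_nbr S u xu -> private_nbr S r xv -> ~~ e xu xv -> False.
Proof.
move=> P5 uS; rewrite eq_sym => ur nru [uxu privu] [rxv privr] nxuxv.
case: (ex_minnP (ex_intro (fun n => u \in ball n) _ (subsetP ball_exhaust u uS))).
move=> m um minm; have far_u k : k < m -> u \notin ball k.
  by move=> ltkm; apply/negP => /minm; rewrite leqNgt ltkm.
have inS n q : q \in ball n -> q \in S by apply: (subsetP (ball_subset n)).
have m_gt1 : 1 < m.
  rewrite ltnNge; apply/negP => m1; have := subsetP (subset_ball m1) u um.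
  by rewrite mem_ball1 (negbTE ur) (negbTE nru) andbF.
case: m um minm far_u m_gt1 => [|[|[|n]]] // um _ far_u _.
- have [q /setDP[qB nq0] equ] := ball_predS um (far_u 1 (ltnSn 1)).
  have qr : q != r by move: nq0; rewrite inE.
  have erq : e r q by move: qB; rewrite mem_ball1 (negbTE qr) => /andP[].
  apply: (@no_induced_P5 xu u q r xv) => //; try by rewrite esym.
  + by rewrite esym; apply: (privu q (inS 1 q qB)); apply: ball_neq qB (far_u 1 _).
  + by rewrite esym; apply: (privu r rS); rewrite eq_sym.
  + exact: (privr u uS ur).
  + exact: (privr q (inS 1 q qB) qr).
- have [q2 /setDP[q2B nq2] eq2u] := ball_predS um (far_u _ (ltnSn _)).
  have [q3 /setDP[q3B nq3] eq3q2] := ball_predS q2B nq2.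
  have [q4 q4B eq4q3] := ball_pred q3B nq3.
  have q_ne_u k q : k < n.+3 -> q \in ball k -> q != u.
    by move=> /far_u nu qB; apply: ball_neq qB nu.
  apply: (@no_induced_P5 xu u q2 q3 q4) => //; try by rewrite esym.
  + by rewrite esym; apply: (privu q2 (inS _ q2 q2B)); exact: q_ne_u (ltnSn _) q2B.
  + by rewrite esym; apply: (privu q3 (inS _ q3 q3B)); exact: q_ne_u (leqnSn _) q3B.
  + by rewrite esym; apply: (privu q4 (inS _ q4 q4B)); exact: q_ne_u (leqW (leqnSn _)) q4B.
  + by rewrite esym (ball_far q3B uS (far_u _ (ltnSn _))).
  + have q4B' : q4 \in ball n.+1 by apply: (subsetP (subset_ball (leqnSn _))).
    by rewrite esym (ball_far q4B' uS (far_u _ (ltnSn _))).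
  + by rewrite esym (ball_far q4B (inS _ q2 q2B) nq2).
Qed.

End Balls.

Lemma minimal_connected_dominating_clique (S R : {set T}) : P5_free e ->
  (forall z, z \in R -> is_module e (component e R z)) ->
  [disjoint S & R] -> connected_induced e S -> dominates S R ->
  (forall w, w \in S -> ~ (connected_induced e (S :\ w) /\ dominates (S :\ w) R)) ->
  is_clique e S.
Proof.
move=> P5 modR SR connS domS minS a b aS bS ab; apply: contraT => nab.
have [v [vS av nav connSv]] := exists_noncut_far aS connS bS ab nab.
have va : v != a by rewrite eq_sym.
have nva : ~~ e v a by rewrite esym.
have [u [uS vu nvu connSu]] := exists_noncut_far vS connS aS va nva.
have [xv xvR privv] := private_nbr_of_minimal domS (fun d => minS v vS (conj connSv d)).
have [xu xuR privu] := private_nbr_of_minimal domS (fun d => minS u uS (conj connSu d)).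
have nxuxv : ~~ e xu xv.
  have uv : u != v by rewrite eq_sym.
  apply: contraNN (proj2 privv u uS uv) => exuxv.
  rewrite esym -(component_module_adj modR xuR xvR exuxv) ?(disjointFr SR) //.
  by rewrite esym (proj1 privu).
by exfalso; apply: (P5_free_private_far vS connS P5 uS vu nvu privu privv nxuxv).
Qed.

End SimpleGraph.

Theorem claim4p5 (T : finType) (e : rel T) (k : nat) (C D R : {set T}) :
  simple_graph e ->
  P5_free e ->
  1 <= k ->
  connected_induced e C ->
  (forall Q : {set T}, Q \subset C -> is_clique e Q -> #|Q| <= k) ->
  D \subset C ->
  #|D| <= k.+1 ->
  (forall v, v \in C -> v \in D \/ exists2 d, d \in D & e d v) ->
  R \subset nbhd e C ->
  (forall x, x \in R -> is_module e (component e R x)) ->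
  exists Dt : {set T},
    [/\ dominating_in e (R :|: C) Dt, D \subset Dt & #|Dt :\: D| <= maxn k.+1 3].
Proof.
move=> [esym eirr] P5 _ connC cliqueC DC _ domD RN modR.
have CR : [disjoint C & R].
  rewrite disjoint_sym disjoints_subset; apply/subsetP => x /(subsetP RN).
  by rewrite !inE => /andP[].
have domC : dominates e C R.
  by move=> x /(subsetP RN); rewrite inE => /andP[_ /existsP[u /andP[uC eux]]]; exists u.
have [Q QC [[connQ domQ] minQ]] :=
  minimal_removal (P := fun S => connected_induced e S /\ dominates e S R) (conj connC domC).
have cliqueQ :=
  minimal_connected_dominating_clique esym eirr P5 modR (disjointWl QC CR) connQ domQ minQ.
exists (D :|: Q); split; [split | exact: subsetUl |].
- by rewrite subUset (subset_trans DC) ?(subset_trans QC) ?subsetUr.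
- move=> v; rewrite inE => /orP[/domQ[z zQ ezv] | /domD[vD | [d dD edv]]].
  + by right; exists z; rewrite // inE zQ orbT.
  + by left; rewrite inE vD.
  + by right; exists d; rewrite // inE dD.
- rewrite setDUl setDv set0U (leq_trans (subset_leq_card (subsetDl Q D))) //.
  by rewrite (leq_trans (cliqueC Q QC cliqueQ)) // (leq_trans (leqnSn k)) ?leq_maxl.
Qed.
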